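(* Let $\beta\in[0,1]$, $n\in\mathbb{N}$, and let $\underline{\Delta}:\{k\in\mathbb{N}_0^{\{0,1\}^2}: k_{++}=n\}\to[-1,1]$ be a function. A. The following three assertions are equivalent: (i) $\underline{\Delta}$ is a lower $\beta$-confidence bound for the parameter $q\mapsto q_{01}-q_{10}$ in the multinomial model $\mathcal{M}:=(\mathrm{M}_{n,q}: q\in\mathrm{prob}(\{0,1\}^2))$. (ii) $\underline{\Delta}$ is a lower $\beta$-confidence bound for the parameter $(\pi,\chi)\mapsto \pi_1(\chi^{(2)}_{1|1}-\chi^{(1)}_{1|1})-(1-\pi_1)(\chi^{(2)}_{0|0}-\chi^{(1)}_{0|0})$ in the full latent class model $\mathcal{P}_2$. (iii) $\underline{\Delta}$ is a lower $\beta$-confidence bound for the parameter $(\pi,\chi)\mapsto \pi_1(\chi^{(2)}_{1|1}-\chi^{(1)}_{1|1})$ in the restricted latent class model $\mathcal{P}_{2,\le}$. B. Let $\underline{\Delta}$ satisfy (i)–(iii) and let $\tilde{\Delta}:\{k\in\mathbb{N}_0^{\{0,1\}^2}: k_{++}=n\}\to[-1,1]$ be another function satisfying (i)–(iii). If $\tilde{\Delta}$ is worse than $\underline{\Delta}$ as a lower $\beta$-confidence bound for the estimation problem ($\mathcal{P}_{2,\le}$, parameter in (iii)), then $\tilde{\Delta}$ is worse than $\underline{\Delta}$ also for the estimation problem ($\mathcal{P}_2$, parameter in (ii)), and equivalently for ($\mathcal{M}$, parameter in (i)). C. If $\underline{\Delta}$ is an admissible $\beta$-confidence bound for one of the estimation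 problems ($\mathcal{M}$, parameter in (i)) and ($\mathcal{P}_2$, parameter in (ii)), then it is admissible for the other one as well, and also for ($\mathcal{P}_{2,\le}$, parameter in (iii)).
   Context: For a finite set $\mathcal{X}$, $\mathrm{prob}(\mathcal{X})$ denotes the set of probability densities $p:\mathcal{X}\to[0,1]$ with $\sum_x p_x=1$; for finite sets $\mathcal{X},\mathcal{Y}$, $\mathrm{markov}(\mathcal{X},\mathcal{Y})$ denotes the set of maps $(x,y)\mapsto p_{y|x}$ with $p_{\cdot|x}\in\mathrm{prob}(\mathcal{Y})$ for every $x$. $\mathrm{M}_{n,p}$ is the multinomial distribution with sample size $n$ and probability vector $p$, i.e. $\mathrm{M}_{n,p}(\{k\})=n!\prod_x p_x^{k_x}/k_x!$ for $k\in\mathbb{N}_0^{\mathcal{X}}$ with $\sum_x k_x=n$. A subscript $+$ denotes summation over the replaced index, e.g. $k_{++}=\sum_{i,j}k_{ij}$, $q_{1+}=q_{10}+q_{11}$. Let $\Theta_2:=\mathrm{prob}(\{0,1\})\times\mathrm{markov}(\{0,1\},\{0,1\}^2)$, with elements $\theta=(\pi,\chi)$. Define $\mu(\theta)\in\mathrm{prob}(\{0,1\}^2)$ by $\mu(\theta)_j=\sum_{i=0}^1\pi_i\chi_{j|i}$ for $j\in\{0,1\}^2$, and $P_\theta:=\mathrm{M}_{n,\mu(\theta)}$. For $i,\iota\in\{0,1\}$ put $\chi^{(1)}_{\iota|i}:=\chi_{\iota 0|i}+\chi_{\iota 1|i}$ and $\chi^{(2)}_{\iota|i}:=\chi_{0\iota|i}+\chi_{1\iota|i}$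 (characteristics of the first and second test; $\pi_1$ is the prevalence, $\chi^{(m)}_{1|1}$ the sensitivity and $\chi^{(m)}_{0|0}$ the specificity of test $m$). The full latent class model is $\mathcal{P}_2:=(P_\theta:\theta\in\Theta_2)$; the restricted latent class model is $\mathcal{P}_{2,\le}:=(P_\theta:\theta\in\Theta_{2,\le})$ with $\Theta_{2,\le}:=\{(\pi,\chi)\in\Theta_2:\chi^{(1)}_{0|0}\le\chi^{(2)}_{0|0}\}$. For a statistical model $(P_\theta:\theta\in\Theta)$ on a sample space and a parameter $\kappa:\Theta\to\overline{\mathbb{R}}$ (not necessarily identifiable), a measurable $\underline{\kappa}$ with values in $\overline{\mathbb{R}}$ is a lower $\beta$-confidence bound if $P_\theta(\underline{\kappa}\le\kappa(\theta))\ge\beta$ for all $\theta$. For two such bounds, $\tilde{\kappa}$ is called worse than $\underline{\kappa}$ if $P_\theta(\tilde{\kappa}\ge t)\le P_\theta(\underline{\kappa}\ge t)$ for all $\theta\in\Theta$ and all $t<\kappa(\theta)$; strictly worse if moreover strict inequality holds for at least one $\theta$ and $t$. $\underline{\kappa}$ is admissible (as a lower $\beta$-confidence bound for the problem) if no other lower $\beta$-confidence bound for that problem is strictly better (i.e. no bound relative to which $\underline{\kappa}$ is strictly worse). *)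

From HB Require Import structures.
From mathcomp Require Import all_boot all_order all_algebra.
From mathcomp Require Import reals constructive_ereal.
Set Implicit Arguments. Unset Strict Implicit. Unset Printing Implicit Defensive.
Import Order.TTheory GRing.Theory Num.Theory.
Local Open Scope ring_scope.
Local Open Scope ereal_scope.

(* Cells of {0,1}^2 : (j1, j2) with false = 0, true = 1;
   j1 = result of test 1, j2 = result of test 2. *)
Definition cell := (bool * bool)%type.

(* Sample space {k in N_0^{{0,1}^2} : k_{++} = n}; counts are bounded by n,
   so we take them in 'I_n.+1 to get a finite type. *)
Definition sample (n : nat) :=
  {k : {ffun cell -> 'I_n.+1} | (\sum_(j : cell) (k j : nat) == n)%N}.

Section Defs.
Variable R : realType.

Definition is_prob (X : finType) (p : X -> R) : Prop :=
  (forall x, (0 <= p x)%R) /\ (\sum_(x : X) p x)%R = 1%R.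

Definition mult_pmf (n : nat) (p : cell -> R) (k : sample n) : R :=
  ((n`!)%:R * \prod_(j : cell) (p j ^+ (val k j) / ((val k j)`!)%:R))%R.

Definition Pr (n : nat) (p : cell -> R) (A : pred (sample n)) : R :=
  (\sum_(k : sample n | A k) mult_pmf p k)%R.

(* A generic statistical model on the sample space: parameter type T,
   parameter set Theta, and theta |-> cell-probability vector law theta,
   P_theta := M_{n, law theta}.  kappa is the parameter of interest. *)

(* lower beta-confidence bound (every map on the finite discrete sample
   space is measurable) *)
Definition is_lcb (n : nat) (T : Type) (Theta : T -> Prop) (law : T -> cell -> R)
    (kappa : T -> R) (beta : R) (L : sample n -> \bar R) : Prop :=
  forall t, Theta t -> (beta <= Pr (law t) [pred k | (L k <= (kappa t)%:E)%E])%R.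

Definition worse (n : nat) (T : Type) (Theta : T -> Prop) (law : T -> cell -> R)
    (kappa : T -> R) (Lt L : sample n -> \bar R) : Prop :=
  forall t, Theta t -> forall s : \bar R, (s < (kappa t)%:E)%E ->
    (Pr (law t) [pred k | (s <= Lt k)%E] <= Pr (law t) [pred k | (s <= L k)%E])%R.

Definition strictly_worse (n : nat) (T : Type) (Theta : T -> Prop)
    (law : T -> cell -> R) (kappa : T -> R) (Lt L : sample n -> \bar R) : Prop :=
  worse Theta law kappa Lt L /\
  exists t, Theta t /\ exists s : \bar R, (s < (kappa t)%:E)%E /\
    (Pr (law t) [pred k | (s <= Lt k)%E] < Pr (law t) [pred k | (s <= L k)%E])%R.

Definition admissible (n : nat) (T : Type) (Theta : T -> Prop)
    (law : T -> cell -> R) (kappa : T -> R) (beta : R) (L : sample n -> \bar R)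
    : Prop :=
  is_lcb Theta law kappa beta L /\
  forall L' : sample n -> \bar R, is_lcb Theta law kappa beta L' ->
    ~ strictly_worse Theta law kappa L L'.

Definition ThetaM (q : cell -> R) : Prop := is_prob q.
Definition lawM (q : cell -> R) : cell -> R := q.
Definition kappaM (q : cell -> R) : R := (q (false, true) - q (true, false))%R.

(* theta = (pi, chi), pi : prob({0,1}), chi i : prob({0,1}^2) *)
Definition LCparam := ((bool -> R) * (bool -> cell -> R))%type.

Definition Theta2 (th : LCparam) : Prop :=
  is_prob th.1 /\ forall i, is_prob (th.2 i).

Definition mu (th : LCparam) (j : cell) : R := (\sum_(i : bool) th.1 i * th.2 i j)%R.

Definition chi1 (th : LCparam) (iota i : bool) : R :=
  (th.2 i (iota, false) + th.2 i (iota, true))%R.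
Definition chi2 (th : LCparam) (iota i : bool) : R :=
  (th.2 i (false, iota) + th.2 i (true, iota))%R.

Definition Theta2le (th : LCparam) : Prop :=
  Theta2 th /\ (chi1 th false false <= chi2 th false false)%R.

Definition kappa2 (th : LCparam) : R :=
  (th.1 true * (chi2 th true true - chi1 th true true)
   - (1 - th.1 true) * (chi2 th false false - chi1 th false false))%R.

Definition kappa2le (th : LCparam) : R :=
  (th.1 true * (chi2 th true true - chi1 th true true))%R.

End Defs.

From HB Require Import structures.
From mathcomp Require Import all_boot all_order all_algebra.
From mathcomp Require Import reals constructive_ereal.
From mathcomp Require Import ring lra.
Set Implicit Arguments. Unset Strict Implicit.
Import Order.TTheory GRing.Theory Num.Theory.
Local Open Scope ring_scope.

(* The latent class model is a reparametrization of the multinomial model: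
   mu maps Theta_2 into prob({0,1}^2) with kappa2 = kappaM o mu, and every q is
   reached by a parameter of prevalence 1, on which also kappa2le = kappaM.
   Hence confidence bounds, the order "worse" and admissibility transfer
   between M and P_2, and from M to P_{2,<=} where kappa2 <= kappa2le.  The one
   extra ingredient is for admissibility in P_{2,<=}: acceptance probabilities
   are polynomial in the cell probabilities, so equality on the region
   {kappaM > s}, which contains points near the mass at (0,1), propagates to
   every q. *)

Section Segment.
Variable R : realType.

Definition segment {X : Type} (p0 p1 : X -> R) (x : R) : X -> R :=
  fun j => x * p0 j + (1 - x) * p1 j.

Lemma is_prob_segment (X : finType) (p0 p1 : X -> R) x :
  is_prob p0 -> is_prob p1 -> 0 <= x <= 1 -> is_prob (segment p0 p1 x).
Proof.
move=> [p0_ge0 p0_sum] [p1_ge0 p1_sum] /andP[x_ge0 x_le1]; split=> [j|].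
  by rewrite addr_ge0 // mulr_ge0 // subr_ge0.
by rewrite big_split /= -!mulr_sumr p0_sum p1_sum !mulr1 addrC subrK.
Qed.

Lemma poly_eq0_on_interval (P : {poly R}) (c : R) :
  0 < c -> (forall x, 0 < x < c -> P.[x] = 0) -> P = 0.
Proof.
move=> c_gt0 P0.
apply: (@roots_geq_poly_eq0 _ P [seq c / (i.+2)%:R | i <- iota 0 (size P)]).
- apply/allP => _ /mapP [i _ ->]; apply/eqP/P0.
  by rewrite divr_gt0 ?ltr0n //= ltr_pdivrMr ?ltr0n // ltr_pMr // ltr1n.
- rewrite map_inj_uniq ?iota_uniq // => i j /(mulfI (lt0r_neq0 c_gt0)).
  by move/invr_inj/eqP; rewrite eqr_nat !eqSS => /eqP.
- by rewrite size_map size_iota.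
Qed.

Variable n : nat.

Lemma Pr_eq_law {p p' : cell -> R} (A : pred (sample n)) :
  p =1 p' -> Pr p A = Pr p' A.
Proof.
move=> pp'; apply: eq_bigr => k _; congr (_ * _).
by apply: eq_bigr => j _; rewrite pp'.
Qed.

Lemma Pr_segment_poly (p0 p1 : cell -> R) (A : pred (sample n)) :
  exists P : {poly R}, forall x, P.[x] = Pr (segment p0 p1 x) A.
Proof.
pose Q (j : cell) : {poly R} := 'X * (p0 j)%:P + (1 - 'X) * (p1 j)%:P.
exists (\sum_(k | A k) (n`!)%:R%:P *
  \prod_(j : cell) (Q j ^+ val k j * (((val k j)`!)%:R^-1)%:P)) => x.
rewrite horner_sum; apply: eq_bigr => k _.
rewrite hornerCM horner_prod; congr (_ * _); apply: eq_bigr => j _.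
by rewrite hornerM horner_exp hornerC /Q !hornerE.
Qed.

Lemma Pr_segment_eq (p0 p1 : cell -> R) (A B : pred (sample n)) (c : R) :
  0 < c -> (forall x, 0 < x < c -> Pr (segment p0 p1 x) A = Pr (segment p0 p1 x) B) ->
  Pr p0 A = Pr p0 B.
Proof.
move=> c_gt0 eqAB.
have [PA PAE] := Pr_segment_poly p0 p1 A; have [PB PBE] := Pr_segment_poly p0 p1 B.
have /eqP : PA - PB = 0.
  apply: (@poly_eq0_on_interval _ c c_gt0) => x x0c.
  by rewrite hornerD hornerN PAE PBE eqAB ?subrr.
rewrite subr_eq0 => /eqP PAB.
have seg1 : segment p0 p1 1 =1 p0 by move=> j; rewrite /segment subrr mul0r mul1r addr0.
by rewrite -(Pr_eq_law A seg1) -(Pr_eq_law B seg1) -PAE -PBE PAB.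
Qed.
End Segment.

Section Models.
Variables (R : realType) (n : nat).

Lemma Pr_le_subset (p : cell -> R) (A B : pred (sample n)) :
  (forall j, 0 <= p j) -> (forall k, A k -> B k) -> Pr p A <= Pr p B.
Proof.
move=> p_ge0 AB; rewrite /Pr [leRHS]big_mkcond [leLHS]big_mkcond /=.
apply: ler_sum => k _; case: (boolP (A k)) => [/AB -> //|_].
case: (B k) => //; rewrite /mult_pmf mulr_ge0 //.
by apply: prodr_ge0 => j _; rewrite divr_ge0 // exprn_ge0.
Qed.

Definition model_embedding {T T' : Type}
    (Theta : T -> Prop) (law : T -> cell -> R) (kappa : T -> R)
    (Theta' : T' -> Prop) (law' : T' -> cell -> R) (kappa' : T' -> R)
    (f : T -> T') : Prop :=
  forall t, Theta t -> [/\ Theta' (f t), law' (f t) =1 law t & kappa' (f t) = kappa t].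

Section Embedding.
Variables (T T' : Type) (Theta : T -> Prop) (law : T -> cell -> R) (kappa : T -> R).
Variables (Theta' : T' -> Prop) (law' : T' -> cell -> R) (kappa' : T' -> R).
Variable f : T -> T'.
Hypothesis f_emb : model_embedding Theta law kappa Theta' law' kappa' f.

Lemma is_lcb_embedding beta (L : sample n -> \bar R) :
  is_lcb Theta' law' kappa' beta L -> is_lcb Theta law kappa beta L.
Proof.
move=> lcbL t /f_emb [Theta't lawE kappaE].
by rewrite -kappaE -(Pr_eq_law _ lawE); exact: lcbL.
Qed.

Lemma worse_embedding (Lt L : sample n -> \bar R) :
  worse Theta' law' kappa' Lt L -> worse Theta law kappa Lt L.
Proof.
move=> wLt t /f_emb [Theta't lawE kappaE] s; rewrite -kappaE => s_lt.
by rewrite -!(Pr_eq_law _ lawE); exact: wLt.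
Qed.

Lemma strictly_worse_embedding (Lt L : sample n -> \bar R) :
  worse Theta' law' kappa' Lt L -> strictly_worse Theta law kappa Lt L ->
  strictly_worse Theta' law' kappa' Lt L.
Proof.
move=> wLt [_ [t [/f_emb [Theta't lawE kappaE] [s [s_lt Pr_lt]]]]].
split=> //; exists (f t); split=> //; exists s.
by rewrite kappaE !(Pr_eq_law _ lawE).
Qed.
End Embedding.

Lemma admissible_embedding (T T' : Type)
    (Theta : T -> Prop) (law : T -> cell -> R) (kappa : T -> R)
    (Theta' : T' -> Prop) (law' : T' -> cell -> R) (kappa' : T' -> R)
    (f : T -> T') (g : T' -> T) beta (L : sample n -> \bar R) :
  model_embedding Theta law kappa Theta' law' kappa' f ->
  model_embedding Theta' law' kappa' Theta law kappa g ->
  admissible Theta law kappa beta L -> admissible Theta' law' kappa' beta L.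
Proof.
move=> f_emb g_emb [lcbL L_adm]; split; first exact: (is_lcb_embedding g_emb lcbL).
move=> L' lcbL' swL; apply: (L_adm L' (is_lcb_embedding f_emb lcbL')).
exact: (strictly_worse_embedding g_emb (worse_embedding f_emb swL.1) swL).
Qed.

Lemma is_lcb_weaken (T : Type) (Theta Theta' : T -> Prop) (law : T -> cell -> R)
    (kappa kappa' : T -> R) beta (L : sample n -> \bar R) :
  (forall t, Theta' t -> Theta t /\ kappa t <= kappa' t) ->
  (forall t j, Theta' t -> 0 <= law t j) ->
  is_lcb Theta law kappa beta L -> is_lcb Theta' law kappa' beta L.
Proof.
move=> sub law_ge0 lcbL t Theta't; have [Thetat le_kappa] := sub t Theta't.
apply: le_trans (lcbL t Thetat) _; apply: Pr_le_subset => [j|k /= Lk].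
  exact: law_ge0.
by apply: le_trans Lk _; rewrite lee_fin.
Qed.

Lemma admissible_worse_eq (T : Type) (Theta : T -> Prop) (law : T -> cell -> R)
    (kappa : T -> R) beta (L L' : sample n -> \bar R) t (s : \bar R) :
  admissible Theta law kappa beta L -> is_lcb Theta law kappa beta L' ->
  worse Theta law kappa L L' -> Theta t -> (s < (kappa t)%:E)%E ->
  Pr (law t) [pred k | (s <= L k)%E] = Pr (law t) [pred k | (s <= L' k)%E].
Proof.
move=> [_ L_adm] lcbL' wL Thetat s_lt; apply/eqP; rewrite eq_le wL //=.
rewrite leNgt; apply/negP => Pr_lt; apply: (L_adm L' lcbL').
by split=> //; exists t; split=> //; exists s.
Qed.
End Models.

Lemma prob_le1 (R : realType) (X : finType) (p : X -> R) (x : X) : is_prob p -> p x <= 1.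
Proof.
move=> [p_ge0 <-]; rewrite (bigD1 x) //= lerDl.
by apply: sumr_ge0 => y _; exact: p_ge0.
Qed.

Section LatentClass.
Variable R : realType.
Implicit Types (q : cell -> R) (th : LCparam R).

Lemma sum_bool (f : bool -> R) : \sum_(i : bool) f i = f true + f false.
Proof. exact: big_bool. Qed.

Lemma kappaM_ge q : is_prob q -> -1 <= kappaM q.
Proof.
move=> q_prob; have := prob_le1 (true, false) q_prob.
have := q_prob.1 (false, true); rewrite /kappaM; lra.
Qed.

Lemma kappaM_segment q0 q1 x :
  kappaM (segment q0 q1 x) = x * kappaM q0 + (1 - x) * kappaM q1.
Proof. by rewrite /kappaM /segment; ring. Qed.

Lemma mu_prob th : Theta2 th -> is_prob (mu th).
Proof.
move=> [[pi_ge0 pi_sum] chi_prob]; split=> [j|].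
  by apply: sumr_ge0 => i _; apply: mulr_ge0; [exact: pi_ge0 | exact: (chi_prob i).1].
rewrite /mu exchange_big /= -pi_sum; apply: eq_bigr => i _.
by rewrite -mulr_sumr (chi_prob i).2 mulr1.
Qed.

Lemma kappa2_mu th : Theta2 th -> kappa2 th = kappaM (mu th).
Proof.
move=> [[_ pi_sum] _]; rewrite sum_bool in pi_sum.
rewrite /kappa2 /kappaM /mu /chi1 /chi2 !sum_bool.
have -> : 1 - th.1 true = th.1 false by rewrite -pi_sum addrC addKr.
by ring.
Qed.

Lemma kappa2_le_kappa2le th : Theta2le th -> kappa2 th <= kappa2le th.
Proof.
move=> [[[pi_ge0 pi_sum] _] chi00_le]; rewrite sum_bool in pi_sum.
rewrite /kappa2 /kappa2le lerBlDr lerDl mulr_ge0 ?subr_ge0 //.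
by have := pi_ge0 false; lra.
Qed.

Lemma kappa2le_le1 th : Theta2 th -> kappa2le th <= 1.
Proof.
move=> [[pi_ge0 pi_sum] chi_prob]; rewrite sum_bool in pi_sum.
have := pi_ge0 true; have := pi_ge0 false.
have := prob_le1 (false, true) (chi_prob true); have := (chi_prob true).1 (true, false).
rewrite /kappa2le /chi1 /chi2; nra.
Qed.

Definition cell_mass (j0 : cell) : cell -> R := fun j => (j == j0)%:R.

Lemma is_prob_cell_mass j0 : is_prob (cell_mass j0).
Proof.
split=> [j|]; first by rewrite ler0n.
by rewrite (bigD1 j0) //= /cell_mass eqxx big1 ?addr0 // => j /negbTE ->.
Qed.

Lemma kappaM_cell_mass01 : kappaM (cell_mass (false, true)) = 1.
Proof. by rewrite /kappaM /cell_mass /= subr0. Qed.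

(* Prevalence 1 with chi_{.|1} = q, so that mu = q; the healthy class is put at
   the point mass on (0,0), which satisfies the constraint of Theta_{2,<=}. *)
Definition diseased_only q : LCparam R :=
  (fun i : bool => i%:R, fun i : bool => if i then q else cell_mass (false, false)).

Lemma Theta2le_diseased_only q : is_prob q -> Theta2le (diseased_only q).
Proof.
move=> q_prob; split; first split.
- split=> [[]|] /=; rewrite ?ler01 ?lexx //.
  by rewrite sum_bool /= addr0.
- by case=> //=; exact: is_prob_cell_mass.
by rewrite /chi1 /chi2 /= /cell_mass /=.
Qed.

Lemma mu_diseased_only q : mu (diseased_only q) =1 q.
Proof. by move=> j; rewrite /mu sum_bool /= mul1r mul0r addr0. Qed.

Lemma kappa2le_diseased_only q : kappa2le (diseased_only q) = kappaM q.
Proof. by rewrite /kappa2le /chi1 /chi2 /kappaM /=; ring. Qed.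

Lemma mu_embedding : model_embedding (@Theta2 R) (@mu R) (@kappa2 R)
  (@ThetaM R) (@lawM R) (@kappaM R) (@mu R).
Proof. by move=> th Theta2th; split; [exact: mu_prob | | rewrite kappa2_mu]. Qed.

Lemma diseased_only_embedding_2le : model_embedding (@ThetaM R) (@lawM R) (@kappaM R)
  (@Theta2le R) (@mu R) (@kappa2le R) diseased_only.
Proof.
move=> q q_prob; split; [exact: Theta2le_diseased_only | exact: mu_diseased_only |].
exact: kappa2le_diseased_only.
Qed.

Lemma diseased_only_embedding_2 : model_embedding (@ThetaM R) (@lawM R) (@kappaM R)
  (@Theta2 R) (@mu R) (@kappa2 R) diseased_only.
Proof.
move=> q q_prob; have [Theta2d _] := Theta2le_diseased_only q_prob.
split=> //; first exact: mu_diseased_only.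
by rewrite kappa2_mu // /kappaM !mu_diseased_only.
Qed.

Variable n : nat.

Lemma is_lcb_2_2le beta (L : sample n -> \bar R) :
  is_lcb (@Theta2 R) (@mu R) (@kappa2 R) beta L ->
  is_lcb (@Theta2le R) (@mu R) (@kappa2le R) beta L.
Proof.
apply: is_lcb_weaken => [th Theta2le_th|th j [Theta2th _]].
  by split; [exact: Theta2le_th.1 | exact: kappa2_le_kappa2le].
exact: (mu_prob Theta2th).1.
Qed.

(* The segment from q0 to the point mass at (0,1), where kappaM = 1 > s, starts
   in the region kappaM > s. *)
Lemma Pr_eq_of_eq_on_kappaM_gt q0 (s : \bar R) (A B : pred (sample n)) :
  is_prob q0 -> (s < 1%:E)%E ->
  (forall q, is_prob q -> (s < (kappaM q)%:E)%E -> Pr q A = Pr q B) ->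
  Pr q0 A = Pr q0 B.
Proof.
move=> q0_prob s_lt1.
pose seg := segment q0 (cell_mass (false, true)).
have kappa_seg x : 0 <= x -> 1 - 2 * x <= kappaM (seg x).
  move=> x_ge0; rewrite /seg kappaM_segment kappaM_cell_mass01.
  by have := kappaM_ge q0_prob; nra.
have [c /andP[c_gt0 c_le1] c_ok] : exists2 c, 0 < c <= 1 & forall x, 0 <= x < c ->
    (s < (1 - 2 * x)%:E)%E.
  case: s s_lt1 => [r | // | _]; last by exists 1 => [|x _]; [rewrite ltr01 lexx | exact: ltNyr].
  rewrite lte_fin => r_lt1; exists (Num.min 1 ((1 - r) / 2)).
    by rewrite lt_min ltr01 ge_min lexx /=; lra.
  by move=> x /andP[_]; rewrite lt_min lte_fin => /andP[_]; lra.
move=> eqAB.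
apply: (Pr_segment_eq (p1 := cell_mass (false, true)) c_gt0) => x /andP[x_gt0 x_ltc].
have x_ge0 := ltW x_gt0.
apply: eqAB; last by apply: lt_le_trans (c_ok x _) _; rewrite ?x_ge0 // lee_fin kappa_seg.
apply: is_prob_segment => //; first exact: is_prob_cell_mass.
by rewrite x_ge0 (le_trans (ltW x_ltc)).
Qed.

(* Admissibility for M forces equal acceptance probabilities only where
   s < kappaM; the witness mu t of a strict improvement need not lie there, but
   s < kappa2le t <= 1 suffices for the previous lemma. *)
Lemma admissible_2le_of_M beta (L : sample n -> \bar R) :
  admissible (@ThetaM R) (@lawM R) (@kappaM R) beta L ->
  admissible (@Theta2le R) (@mu R) (@kappa2le R) beta L.
Proof.
move=> L_adm; split; first exact/is_lcb_2_2le/(is_lcb_embedding mu_embedding L_adm.1).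
move=> L' lcbL' [wL [t [Theta2le_t [s [s_lt Pr_lt]]]]].
have Theta2t := Theta2le_t.1.
have lcbL'M := is_lcb_embedding diseased_only_embedding_2le lcbL'.
have wLM := worse_embedding diseased_only_embedding_2le wL.
have s_lt1 : (s < 1%:E)%E.
  by apply: lt_le_trans s_lt _; rewrite lee_fin kappa2le_le1.
suff Pr_eq : Pr (mu t) [pred k | (s <= L k)%E] = Pr (mu t) [pred k | (s <= L' k)%E].
  by rewrite Pr_eq ltxx in Pr_lt.
apply: (Pr_eq_of_eq_on_kappaM_gt (mu_prob Theta2t) s_lt1) => q q_prob s_ltq.
exact: (admissible_worse_eq L_adm lcbL'M wLM q_prob s_ltq).
Qed.
End LatentClass.

Theorem theorem1 (R : realType) (beta : R) (n : nat) (D : sample n -> R) :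
  0 <= beta <= 1 -> (0 < n)%N -> (forall k, -1 <= D k <= 1) ->
  let L := fun k => (D k)%:E in
  (* A *)
  ((is_lcb (@ThetaM R) (@lawM R) (@kappaM R) beta L <->
    is_lcb (@Theta2 R) (@mu R) (@kappa2 R) beta L) /\
   (is_lcb (@Theta2 R) (@mu R) (@kappa2 R) beta L <->
    is_lcb (@Theta2le R) (@mu R) (@kappa2le R) beta L)) /\
  (* B *)
  (forall Dt : sample n -> R, (forall k, -1 <= Dt k <= 1) ->
   let Lt := fun k => (Dt k)%:E in
   is_lcb (@ThetaM R) (@lawM R) (@kappaM R) beta L ->
   is_lcb (@Theta2 R) (@mu R) (@kappa2 R) beta L ->
   is_lcb (@Theta2le R) (@mu R) (@kappa2le R) beta L ->
   is_lcb (@ThetaM R) (@lawM R) (@kappaM R) beta Lt ->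
   is_lcb (@Theta2 R) (@mu R) (@kappa2 R) beta Lt ->
   is_lcb (@Theta2le R) (@mu R) (@kappa2le R) beta Lt ->
   worse (@Theta2le R) (@mu R) (@kappa2le R) Lt L ->
   worse (@Theta2 R) (@mu R) (@kappa2 R) Lt L /\
   worse (@ThetaM R) (@lawM R) (@kappaM R) Lt L) /\
  (* C *)
  (admissible (@ThetaM R) (@lawM R) (@kappaM R) beta L \/
   admissible (@Theta2 R) (@mu R) (@kappa2 R) beta L ->
   admissible (@ThetaM R) (@lawM R) (@kappaM R) beta L /\
   admissible (@Theta2 R) (@mu R) (@kappa2 R) beta L /\
   admissible (@Theta2le R) (@mu R) (@kappa2le R) beta L).
Proof.
move=> _ _ _ L.
have lcb_M_2 := is_lcb_embedding (@mu_embedding R) (beta := beta) (L := L).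
have lcb_2_M := is_lcb_embedding (@diseased_only_embedding_2 R) (beta := beta) (L := L).
have lcb_2le_M := is_lcb_embedding (@diseased_only_embedding_2le R) (beta := beta) (L := L).
split; [split; split | split].
- exact: lcb_M_2.
- exact: lcb_2_M.
- exact: is_lcb_2_2le.
- by move=> /lcb_2le_M /lcb_M_2.
- move=> Dt _ Lt _ _ _ _ _ _ /(worse_embedding (@diseased_only_embedding_2le R)) wM.
  by split; first exact: (worse_embedding (@mu_embedding R) wM).
have adm_M_2 := admissible_embedding (@diseased_only_embedding_2 R) (@mu_embedding R).
have adm_2_M := admissible_embedding (@mu_embedding R) (@diseased_only_embedding_2 R).
move=> adm; have admM : admissible (@ThetaM R) (@lawM R) (@kappaM R) beta L.
  by case: adm => [// | /adm_2_M].
by split=> //; split; [exact: adm_M_2 | exact: admissible_2le_of_M].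
Qed.
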